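(* Let $\mathcal V$ be a descent category, $k$ a natural number, $T$ a finite simplicial set and $S\hookrightarrow T$ an $m$-expansion. (i) If $X$ is a $k$-groupoid, then $\mathrm{Map}(T,X)\to\mathrm{Map}(S,X)$ is a cover, and an isomorphism if $m>k$. (ii) If $f:X\to Y$ is a fibration of $k$-groupoids, then $\mathrm{Map}(T,X)\to\mathrm{Map}(S\hookrightarrow T,f)$ is a cover, and an isomorphism if $m>k$.
   Context: A descent category is a small category $\mathcal V$ with a subcategory of morphisms called covers such that: $\mathcal V$ has finite limits; pullbacks of covers are covers; if $f$ and $g\circ f$ are covers then $g$ is a cover. A simplicial space is a simplicial object in $\mathcal V$; for a finite simplicial set $T$, $\mathrm{Map}(T,X)$ is the finite limit representing simplicial maps $T\to X$; $\mathrm{Map}(S\hookrightarrow T,f)=\mathrm{Map}(S,X)\times_{\mathrm{Map}(S,Y)}\mathrm{Map}(T,Y)$. $\Lambda^n_i=\bigcup_{j\ne i}\partial_j\Delta^n$. A $k$-groupoid is a simplicial space with $X_n\to\mathrm{Map}(\Lambda^n_i,X)$ a cover for $n>0$, $0\le i\le n$, and an isomorphism for $n>k$. A fibration is a morphism $f$ with $X_n\to\mathrm{Map}(\Lambda^n_i\hookrightarrow\Delta^n,f)$ a cover for $n>0$, $0\le i\le n$. For $m>0$, $S\hookrightarrow T$ is an $m$-expansion if there is a filtration $S=F_{-1}T\subset F_0T\subset\cdots$ with $T=\bigcup_\ell F_\ell T$, a weakly monotone sequence $n_\ell\ge m$, indices $0\le i_\ell\le n_\ell$, and maps making each $F_\ell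 T$ the pushout of $F_{\ell-1}T\leftarrow\Lambda^{n_\ell}_{i_\ell}\hookrightarrow\Delta^{n_\ell}$. *)

From Stdlib Require List.
From mathcomp Require Import all_boot.

Set Implicit Arguments.
Unset Strict Implicit.
Unset Printing Implicit Defensive.

Record Cat := {
  ob :> Type;
  hom : ob -> ob -> Type;
  idm : forall a, hom a a;
  comp : forall a b c, hom b c -> hom a b -> hom a c;
  compA : forall a b c d (h : hom c d) (g : hom b c) (f : hom a b),
      comp h (comp g f) = comp (comp h g) f;
  comp1l : forall a b (f : hom a b), comp (idm b) f = f;
  comp1r : forall a b (f : hom a b), comp f (idm a) = f
}.

Arguments hom {C} a b : rename.
Arguments idm {C} a : rename.
Arguments comp {C} [a b c] g f : rename.

Definition iso (C : Cat) (a b : C) (f : hom a b) : Prop :=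
  exists g : hom b a, comp g f = idm a /\ comp f g = idm b.

Definition IsTerminal (C : Cat) (t : C) : Prop :=
  forall a : C, exists u : hom a t, forall v : hom a t, v = u.

Definition IsPullback (C : Cat) (a b c : C) (f : hom a c) (g : hom b c)
    (P : C) (p1 : hom P a) (p2 : hom P b) : Prop :=
  comp f p1 = comp g p2 /\
  forall (Q : C) (q1 : hom Q a) (q2 : hom Q b), comp f q1 = comp g q2 ->
    exists u : hom Q P, (comp p1 u = q1 /\ comp p2 u = q2) /\
      forall u' : hom Q P, comp p1 u' = q1 -> comp p2 u' = q2 -> u' = u.
Arguments IsPullback {C a b c} f g P p1 p2.

(* Descent category.  "V has finite limits" is rendered as the standard
   equivalent: V has a terminal object and all pullbacks. *)
Record Descent (C : Cat) := {
  iscover : forall a b : C, hom a b -> Prop;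
  cover_id : forall a : C, iscover (idm a);
  cover_comp : forall (a b c : C) (g : hom b c) (f : hom a b),
      iscover f -> iscover g -> iscover (comp g f);
  has_terminal : exists t : C, IsTerminal t;
  has_pullbacks : forall (a b c : C) (f : hom a c) (g : hom b c),
      exists (P : C) (p1 : hom P a) (p2 : hom P b), IsPullback f g P p1 p2;
  cover_pullback : forall (a b c : C) (f : hom a c) (g : hom b c)
      (P : C) (p1 : hom P a) (p2 : hom P b),
      IsPullback f g P p1 p2 -> iscover g -> iscover p1;
  cover_cancel : forall (a b c : C) (f : hom a b) (g : hom b c),
      iscover f -> iscover (comp g f) -> iscover g
}.

Arguments iscover {C} V [a b] f : rename.

Definition monob m n (f : {ffun 'I_m.+1 -> 'I_n.+1}) : bool :=
  [forall i : 'I_m.+1, forall j : 'I_m.+1, (i <= j)%N ==> (f i <= f j)%N].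

Definition Dmor (m n : nat) := {f : {ffun 'I_m.+1 -> 'I_n.+1} | monob f}.

Lemma monob_id n : monob [ffun i : 'I_n.+1 => i].
Proof.
by apply/forallP => i; apply/forallP => j; apply/implyP; rewrite !ffunE.
Qed.

Lemma monob_comp m n p (g : Dmor n p) (f : Dmor m n) :
  monob [ffun i => sval g (sval f i)].
Proof.
case: g => g /= Hg; case: f => f /= Hf.
apply/forallP => i; apply/forallP => j; apply/implyP => hij; rewrite !ffunE.
have /implyP := forallP (forallP Hf i) j; move=> /(_ hij) h.
by have /implyP := forallP (forallP Hg (f i)) (f j); apply.
Qed.

Definition Did n : Dmor n n := exist (fun f => monob f) _ (monob_id n).
Definition Dcomp m n p (g : Dmor n p) (f : Dmor m n) : Dmor m p :=
  exist (fun h => monob h) _ (monob_comp g f).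

Lemma sig_eqb (T : Type) (P : T -> bool) (x y : {a | P a}) :
  sval x = sval y -> x = y.
Proof.
case: x => x px; case: y => y py /= e; subst y.
by rewrite (bool_irrelevance px py).
Qed.

Record sObj (C : Cat) := {
  sX :> nat -> C;
  sact : forall m n, Dmor m n -> hom (sX n) (sX m);
  sact_id : forall n, sact (Did n) = idm (sX n);
  sact_comp : forall m n p (f : Dmor m n) (g : Dmor n p),
      sact (Dcomp g f) = comp (sact f) (sact g)
}.
Arguments sact {C} X [m n] f : rename.

Record sHom (C : Cat) (X Y : sObj C) := {
  hm :> forall n, hom (X n) (Y n);
  hnat : forall m n (a : Dmor m n),
      comp (hm m) (sact X a) = comp (sact Y a) (hm n)
}.

Record sSet := {
  lev :> nat -> Type;
  act : forall m n, Dmor m n -> lev n -> lev m;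
  act_id : forall n (x : lev n), act (Did n) x = x;
  act_comp : forall m n p (f : Dmor m n) (g : Dmor n p) (x : lev p),
      act (Dcomp g f) x = act f (act g x)
}.
Arguments act A [m n] f x : rename.

Record sMap (A B : sSet) := {
  smap :> forall n, A n -> B n;
  snat : forall m n (f : Dmor m n) (x : A n), smap (act A f x) = act B f (smap x)
}.

(* sub-simplicial sets, given by (boolean) predicates sclosed under the action *)
Definition sclosed (A : sSet) (P : forall n, A n -> bool) : Prop :=
  forall m n (f : Dmor m n) (x : A n), P n x -> P m (act A f x).

Section Sub.
Variables (A : sSet) (P : forall n, A n -> bool) (cl : sclosed P).

Definition sub_act m n (f : Dmor m n) (x : {y : A n | P y}) : {y : A m | P y} :=
  exist _ (act A f (sval x)) (cl f (svalP x)).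

Lemma sub_act_id n (x : {y : A n | P y}) : sub_act (Did n) x = x.
Proof. by apply: sig_eqb; rewrite /= act_id. Qed.

Lemma sub_act_comp m n p (f : Dmor m n) (g : Dmor n p) (x : {y : A p | P y}) :
  sub_act (Dcomp g f) x = sub_act f (sub_act g x).
Proof. by apply: sig_eqb; rewrite /= act_comp. Qed.

Definition sub : sSet := Build_sSet sub_act_id sub_act_comp.

Definition incl : sMap sub A := @Build_sMap sub A (fun n x => sval x)
  (fun m n f x => erefl).
End Sub.

Definition subincl (A : sSet) (P Q : forall n, A n -> bool)
  (clP : sclosed P) (clQ : sclosed Q) (h : forall n x, P n x -> Q n x) :
  sMap (sub clP) (sub clQ).
Proof.
refine (@Build_sMap (sub clP) (sub clQ)
          (fun n x => exist _ (sval x) (h n _ (svalP x))) _).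
by move=> m n f x; apply: sig_eqb.
Defined.

Lemma Delta_act_id n m (x : Dmor m n) : Dcomp x (Did m) = x.
Proof. by apply: sig_eqb; apply/ffunP => i; rewrite /= !ffunE. Qed.

Lemma Delta_act_comp n m p q (f : Dmor m p) (g : Dmor p q) (x : Dmor q n) :
  Dcomp x (Dcomp g f) = Dcomp (Dcomp x g) f.
Proof. by apply: sig_eqb; apply/ffunP => i; rewrite /= !ffunE. Qed.

Definition Delta (n : nat) : sSet :=
  @Build_sSet (fun m => Dmor m n) (fun m p f x => Dcomp x f)
    (@Delta_act_id n) (@Delta_act_comp n).

(* the horn Lambda^n_i = union over j <> i of the faces d_j Delta^n, where
   d_j Delta^n consists of the simplices not hitting the vertex j *)
Definition hornb n (i : 'I_n.+1) m (x : Dmor m n) : bool :=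
  [exists j : 'I_n.+1, (j != i) && [forall k : 'I_m.+1, sval x k != j]].

Arguments hornb [n] i m x.

Lemma horn_closed n (i : 'I_n.+1) : sclosed (A := Delta n) (hornb i).
Proof.
move=> m p f x /existsP [j /andP [ji /forallP hj]].
apply/existsP; exists j; rewrite ji /=; apply/forallP => k.
by rewrite /= ffunE; apply: hj.
Qed.

Arguments horn_closed [n] i.
Definition Horn n (i : 'I_n.+1) : sSet := sub (horn_closed i).

Definition IsPushout (A B C D : sSet) (a : sMap A B) (b : sMap A C)
    (c : sMap B D) (d : sMap C D) : Prop :=
  (forall n (x : A n), c n (a n x) = d n (b n x)) /\
  forall (Z : sSet) (u : sMap B Z) (v : sMap C Z),
    (forall n (x : A n), u n (a n x) = v n (b n x)) ->
    exists w : sMap D Z,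
      ((forall n (x : B n), w n (c n x) = u n x) /\
       (forall n (x : C n), w n (d n x) = v n x)) /\
      forall w' : sMap D Z,
        (forall n (x : B n), w' n (c n x) = u n x) ->
        (forall n (x : C n), w' n (d n x) = v n x) ->
        forall n (x : D n), w' n x = w n x.

Definition surjb m n (f : Dmor m n) : bool :=
  [forall j : 'I_n.+1, [exists i : 'I_m.+1, sval f i == j]].

Definition degenerate (T : sSet) n (x : T n) : Prop :=
  exists k, (k < n)%N /\
    exists (s : Dmor n k) (y : T k), surjb s /\ x = act T s y.

Definition finite_sSet (T : sSet) : Prop :=
  exists l : list {n : nat & T n},
    forall n (x : T n), ~ degenerate x -> List.In (existT _ n x) l.

(* The filtration S = F_{-1} T c F_0 T c ... c F_{L-1} T = T is
   encoded as F 0 = S, ..., F L = T (index shifted by one); step l (l < L)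
   is the pushout of F l <- Lambda^{ns l}_{is l} -> Delta^{ns l}. *)
Definition expansion (T : sSet) (S : forall n, T n -> bool) (m : nat) : Prop :=
  (0 < m)%N /\
  exists (L : nat) (F : nat -> forall n, T n -> bool)
         (Fcl : forall l, sclosed (F l))
         (Fsub : forall l n (x : T n), F l n x -> F l.+1 n x)
         (ns : nat -> nat) (ix : forall l, 'I_(ns l).+1),
    (forall n (x : T n), F 0%N n x = S n x) /\
    (forall n (x : T n), F L n x) /\
    (forall l, (l < L)%N -> (m <= ns l)%N) /\
    (forall l, (l.+1 < L)%N -> (ns l <= ns l.+1)%N) /\
    (forall l, (l < L)%N ->
       exists (alpha : sMap (Horn (ix l)) (sub (Fcl l)))
              (beta : sMap (Delta (ns l)) (sub (Fcl l.+1))),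
         IsPushout (incl (horn_closed (ix l))) alpha beta
                   (subincl (Fcl l) (Fcl l.+1) (Fsub l))).

Arguments expansion : clear implicits.

Section Maps.
Variable C : Cat.

(* a cone: a simplicial map T -> Hom(U, X_.) *)
Definition cone (T : sSet) (X : sObj C) (U : C)
    (e : forall n, T n -> hom U (X n)) : Prop :=
  forall m n (a : Dmor m n) (t : T n), e m (act T a t) = comp (sact X a) (e n t).

Definition IsMap (T : sSet) (X : sObj C) (M : C)
    (e : forall n, T n -> hom M (X n)) : Prop :=
  cone e /\
  forall (U : C) (phi : forall n, T n -> hom U (X n)), cone phi ->
    exists u : hom U M, (forall n t, comp (e n t) u = phi n t) /\
      forall u' : hom U M, (forall n t, comp (e n t) u' = phi n t) -> u' = u.

Arguments IsMap T X M e : clear implicits.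

(* Pr holds of the canonical map A -> Map(S, X), where A carries a cone
   eA over T (typically A = Map(T, X)) and S is a sub-simplicial set of T;
   the map is characterised by its components, for every choice of Map(S,X). *)
Definition abs_comparison (Pr : forall a b : C, hom a b -> Prop)
    (T : sSet) (S : forall n, T n -> bool) (clS : sclosed S) (X : sObj C)
    (A : C) (eA : forall n, T n -> hom A (X n)) : Prop :=
  forall (MS : C) (eS : forall n, sub clS n -> hom MS (X n)),
    IsMap (sub clS) X MS eS ->
    forall r : hom A MS, (forall n s, comp (eS n s) r = eA n (sval s)) ->
    Pr A MS r.

(* Pr holds of the canonical map A -> Map(S c-> T, f)
     := Map(S,X) x_{Map(S,Y)} Map(T,Y),
   for every choice of the objects Map(S,X), Map(S,Y), Map(T,Y) and of the
   pullback. *)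
Definition rel_comparison (Pr : forall a b : C, hom a b -> Prop)
    (T : sSet) (S : forall n, T n -> bool) (clS : sclosed S)
    (X Y : sObj C) (f : sHom X Y)
    (A : C) (eA : forall n, T n -> hom A (X n)) : Prop :=
  forall (MSX : C) (eSX : forall n, sub clS n -> hom MSX (X n))
         (MSY : C) (eSY : forall n, sub clS n -> hom MSY (Y n))
         (MTY : C) (eTY : forall n, T n -> hom MTY (Y n)),
    IsMap (sub clS) X MSX eSX -> IsMap (sub clS) Y MSY eSY -> IsMap T Y MTY eTY ->
    forall (fS : hom MSX MSY) (rY : hom MTY MSY),
      (forall n s, comp (eSY n s) fS = comp (f n) (eSX n s)) ->
      (forall n s, comp (eSY n s) rY = eTY n (sval s)) ->
    forall (P : C) (p1 : hom P MSX) (p2 : hom P MTY),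
      IsPullback fS rY P p1 p2 ->
    forall (rX : hom A MSX) (fT : hom A MTY),
      (forall n s, comp (eSX n s) rX = eA n (sval s)) ->
      (forall n t, comp (eTY n t) fT = comp (f n) (eA n t)) ->
    forall q : hom A P, comp p1 q = rX -> comp p2 q = fT ->
    Pr A P q.

(* X_n viewed as Map(Delta^n, X) via Yoneda *)
Definition yon (X : sObj C) (n : nat) : forall m, Delta n m -> hom (X n) (X m) :=
  fun m t => sact X t.
Arguments yon X n : clear implicits.

Definition kgroupoid (V : Descent C) (k : nat) (X : sObj C) : Prop :=
  forall n (i : 'I_n.+1), (0 < n)%N ->
    abs_comparison (iscover V) (horn_closed i) (yon X n) /\
    ((k < n)%N -> abs_comparison (@iso C) (horn_closed i) (yon X n)).

Definition fibration (V : Descent C) (X Y : sObj C) (f : sHom X Y) : Prop :=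
  forall n (i : 'I_n.+1), (0 < n)%N ->
    rel_comparison (iscover V) (horn_closed i) f (yon X n).

End Maps.
Arguments IsMap {C} T X M e.

(* Write Map(K, X) for the object of cones of shape K over X, and, for j : K -> T
   and f : X -> Y, Map(j, f) for the object of pairs (K -> X, T -> Y) compatible
   with f.  Mapping objects out of a horn exist because Lambda^n_i is a finite union
   of faces of Delta^n, and Map(-, X) turns unions (pushouts) into pullbacks.  Each
   step F_l c F_(l+1) of the filtration glues a simplex along a horn, so
   Map(F_(l+1) c-> T, f) is the pullback of Map(F_l c-> T, f) along the horn-filling
   map X_n -> Map(Lambda^n_i c-> Delta^n, f).  That map is a cover, and an isomorphism
   once n > k; both classes are stable under pullback and composition, so composing
   along the filtration gives (ii).  Part (i) is the case Y = 1. *)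

From mathcomp Require Import all_boot zify.
From Stdlib Require Import FunctionalExtensionality ProofIrrelevance IndefiniteDescription.

Set Implicit Arguments.
Unset Strict Implicit.
Unset Printing Implicit Defensive.

Lemma sMap_eq (A B : sSet) (F G : sMap A B) :
  (forall n x, F n x = G n x) -> F = G.
Proof.
case: F => F HF; case: G => G HG /= e.
have E : F = G.
  by apply: functional_extensionality_dep => n; apply: functional_extensionality.
by subst G; f_equal; apply: proof_irrelevance.
Qed.

Lemma sMapE (A B : sSet) (F G : sMap A B) : F = G -> forall n x, F n x = G n x.
Proof. by move=> ->. Qed.
Arguments sMapE {A B F G} _ n x.

Definition scomp (A B D : sSet) (G : sMap B D) (F : sMap A B) : sMap A D.
Proof.
refine (@Build_sMap A D (fun n x => G n (F n x)) _).
by move=> m n f x; rewrite !snat.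
Defined.

Lemma scompA (A B D E : sSet) (a : sMap D E) (b : sMap B D) (c : sMap A B) :
  scomp a (scomp b c) = scomp (scomp a b) c.
Proof. exact: sMap_eq. Qed.

Lemma Dcomp1l m n (t : Dmor m n) : Dcomp (Did n) t = t.
Proof. by apply: sig_eqb; apply/ffunP => i; rewrite /= !ffunE. Qed.

Lemma DcompE m n p (g : Dmor n p) (f : Dmor m n) i :
  sval (Dcomp g f) i = sval g (sval f i).
Proof. by rewrite ffunE. Qed.

Section Cones.
Variable C : Cat.

Lemma pullback_uniq (a b c : C) (f : hom a c) (g : hom b c) P p1 p2 (Q : C)
    (u v : hom Q P) :
  IsPullback f g P p1 p2 -> comp p1 u = comp p1 v -> comp p2 u = comp p2 v -> u = v.
Proof.
case=> sq U e1 e2.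
have E : comp f (comp p1 v) = comp g (comp p2 v) by rewrite !compA sq.
have [w [_ Hw]] := U Q (comp p1 v) (comp p2 v) E.
by rewrite (Hw u e1 e2) (Hw v erefl erefl).
Qed.

Lemma iso_id (a : C) : iso (idm a).
Proof. by exists (idm a); rewrite comp1l. Qed.

Lemma iso_comp (a b c : C) (f : hom a b) (g : hom b c) :
  iso f -> iso g -> iso (comp g f).
Proof.
move=> [f' [f1 f2]] [g' [g1 g2]]; exists (comp f' g'); split.
- by rewrite -compA (compA g') g1 comp1l.
- by rewrite -compA (compA f) f2 comp1l.
Qed.

Lemma iso_cancel_l (a b c : C) (f : hom a b) (g : hom b c) :
  iso g -> iso (comp g f) -> iso f.
Proof.
move=> [g' [h1 h2]] Hgf.
have -> : f = comp g' (comp g f) by rewrite compA h1 comp1l.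
by apply: iso_comp => //; exists g.
Qed.

Lemma iso_cancel_r (a b c : C) (f : hom a b) (g : hom b c) :
  iso f -> iso (comp g f) -> iso g.
Proof.
move=> [f' [h1 h2]] Hgf.
have -> : g = comp (comp g f) f' by rewrite -compA h2 comp1r.
by apply: iso_comp => //; exists f.
Qed.

Lemma iso_pullback (a b c : C) (f : hom a c) (g : hom b c) P p1 p2 :
  IsPullback f g P p1 p2 -> iso g -> iso p1.
Proof.
move=> PB; have [sq U] := PB; move=> [g' [g'g gg']].
have E : comp f (idm a) = comp g (comp g' f) by rewrite compA gg' comp1l comp1r.
have [u [[u1 u2] _]] := U a (idm a) (comp g' f) E.
exists u; split => //; apply: (pullback_uniq PB); rewrite comp1r compA.
  by rewrite u1 comp1l.
by rewrite u2 -compA sq compA g'g comp1l.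
Qed.

Lemma iso_terminal (a b : C) (f : hom a b) : IsTerminal a -> IsTerminal b -> iso f.
Proof.
move=> Ha Hb; have [g _] := Ha b; exists g; split.
- by have [u Hu] := Ha a; rewrite (Hu (comp g f)) (Hu (idm a)).
- by have [u Hu] := Hb b; rewrite (Hu (comp f g)) (Hu (idm b)).
Qed.

Lemma iso_cover (V : Descent C) (a b : C) (f : hom a b) : iso f -> iscover V f.
Proof.
move=> [f' [h1 h2]].
have PB : IsPullback (idm b) (idm b) a f f.
  split => // Q q1 q2; rewrite !comp1l => <-.
  exists (comp f' q1); split; first by rewrite compA h2 comp1l.
  by move=> u' <- _; rewrite compA h1 comp1l.
exact: cover_pullback PB (cover_id V b).
Qed.

(* A cone over X of shape K with vertex U is a simplicial map K -> homs U X. *)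
Definition homs (U : C) (X : sObj C) : sSet.
Proof.
refine (@Build_sSet (fun m => hom U (X m)) (fun m n a g => comp (sact X a) g) _ _).
- by move=> n g; rewrite sact_id comp1l.
- by move=> m n p f g x; rewrite sact_comp compA.
Defined.

Definition precomp (X : sObj C) (K : sSet) (U W : C) (u : hom W U)
    (e : sMap K (homs U X)) : sMap K (homs W X).
Proof.
refine (@Build_sMap K (homs W X) (fun n x => comp (e n x) u) _).
by move=> m n f x; rewrite snat /= compA.
Defined.

Definition postcomp (X Y : sObj C) (f : sHom X Y) (K : sSet) (U : C)
    (e : sMap K (homs U X)) : sMap K (homs U Y).
Proof.
refine (@Build_sMap K (homs U Y) (fun n x => comp (f n) (e n x)) _).
by move=> m n a x; rewrite snat /= !compA hnat.
Defined.

Definition cone_map (K : sSet) (X : sObj C) (U : C) (e : forall n, K n -> hom U (X n))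
  (h : cone e) : sMap K (homs U X) := @Build_sMap K (homs U X) e h.

Lemma sMap_cone (K : sSet) (X : sObj C) (U : C) (e : sMap K (homs U X)) :
  cone (fun n => e n).
Proof. by move=> m n a t; rewrite snat. Qed.

Lemma precomp_comp (X : sObj C) (K : sSet) (U W Z : C) (u : hom W U) (v : hom Z W)
  (e : sMap K (homs U X)) : precomp v (precomp u e) = precomp (comp u v) e.
Proof. by apply: sMap_eq => n x /=; rewrite compA. Qed.

Lemma precomp_id (X : sObj C) (K : sSet) (U : C) (e : sMap K (homs U X)) :
  precomp (idm U) e = e.
Proof. by apply: sMap_eq => n x /=; rewrite comp1r. Qed.

Lemma precomp_scomp (X : sObj C) (K K' : sSet) (U W : C) (u : hom W U)
  (e : sMap K (homs U X)) (g : sMap K' K) : precomp u (scomp e g) = scomp (precomp u e) g.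
Proof. by apply: sMap_eq. Qed.

Lemma postcomp_precomp (X Y : sObj C) (f : sHom X Y) (K : sSet) (U W : C) (u : hom W U)
  (e : sMap K (homs U X)) : postcomp f (precomp u e) = precomp u (postcomp f e).
Proof. by apply: sMap_eq => n x /=; rewrite compA. Qed.

Lemma postcomp_scomp (X Y : sObj C) (f : sHom X Y) (K K' : sSet) (U : C)
  (e : sMap K (homs U X)) (g : sMap K' K) : postcomp f (scomp e g) = scomp (postcomp f e) g.
Proof. by apply: sMap_eq. Qed.

(* [IsMap], with the cone packaged as a simplicial map. *)
Definition represents (K : sSet) (X : sObj C) (M : C) (e : sMap K (homs M X)) : Prop :=
  (forall U (phi : sMap K (homs U X)), exists u : hom U M, precomp u e = phi) /\
  (forall U (u v : hom U M), precomp u e = precomp v e -> u = v).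

Lemma IsMap_represents (K : sSet) (X : sObj C) (M : C) e (h : cone e) :
  IsMap K X M e -> represents (cone_map h).
Proof.
case=> _ U; split.
- move=> W phi; have [u [Hu _]] := U W (fun n => phi n) (sMap_cone phi).
  by exists u; apply: sMap_eq => n x /=; rewrite Hu.
- move=> W u v E.
  have [w [_ Hw]] := U W (fun n x => comp (e n x) u) (sMap_cone (precomp u (cone_map h))).
  by rewrite (Hw u) // (Hw v) // => n t; symmetry; exact: (sMapE E n t).
Qed.

Lemma represents_IsMap (K : sSet) (X : sObj C) (M : C) (e : sMap K (homs M X)) :
  represents e -> IsMap K X M (fun n => e n).
Proof.
case=> Ex Un; split; first exact: sMap_cone.
move=> U phi hphi; have [u Hu] := Ex U (cone_map hphi).
exists u; split; first by move=> n t; exact: (sMapE Hu n t).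
by move=> u' Hu'; apply: Un; rewrite Hu; apply: sMap_eq => n x /=; exact: Hu'.
Qed.

Lemma represents_iso (K : sSet) (X : sObj C) M (e : sMap K (homs M X))
    M' (e' : sMap K (homs M' X)) :
  represents e -> represents e' -> forall th : hom M M', precomp th e' = e -> iso th.
Proof.
move=> R R' th E; have [th' E'] := R.1 M' e'.
exists th'; split.
- by apply: R.2; rewrite -precomp_comp E' E precomp_id.
- by apply: R'.2; rewrite -precomp_comp E E' precomp_id.
Qed.

Lemma represents_transport (X : sObj C) (K K' : sSet) (phi : sMap K K') (psi : sMap K' K) :
  (forall n x, psi n (phi n x) = x) -> (forall n x, phi n (psi n x) = x) ->
  forall M (e : sMap K' (homs M X)), represents e -> represents (scomp e phi).
Proof.
move=> h1 h2 M e [Ex Un]; split.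
- move=> U ph; have [u Hu] := Ex U (scomp ph psi); exists u.
  by rewrite precomp_scomp Hu; apply: sMap_eq => n x /=; rewrite h1.
- move=> U u v E; apply: Un; apply: sMap_eq => n x.
  by have := sMapE E n (psi n x); rewrite /= h2.
Qed.

Lemma empty_represents (X : sObj C) (K : sSet) (hK : forall n (x : K n), False) (t : C) :
  IsTerminal t -> exists e : sMap K (homs t X), represents e.
Proof.
move=> Ht.
have cn : cone (X := X) (U := t) (fun n (x : K n) => False_rect _ (hK n x)).
  by move=> m n a x; case: (hK n x).
exists (cone_map cn); split.
- move=> U phi; have [u _] := Ht U; exists u; apply: sMap_eq => n x; case: (hK n x).
- by move=> U u v _; have [w Hw] := Ht U; rewrite (Hw u) (Hw v).
Qed.

Lemma yoneda_cone (X : sObj C) n : cone (@yon C X n).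
Proof. by move=> m p a t; rewrite /yon /= sact_comp. Qed.

Definition yoneda (X : sObj C) n : sMap (Delta n) (homs (X n) X) := cone_map (@yoneda_cone X n).

Lemma yonedaE (X : sObj C) n (U : C) (c : sMap (Delta n) (homs U X)) :
  c = precomp (c n (Did n)) (yoneda X n).
Proof.
apply: sMap_eq => m t /=; rewrite /yon.
by have := snat c t (Did n); rewrite /= Dcomp1l => ->.
Qed.

Lemma yoneda_represents (X : sObj C) n : represents (yoneda X n).
Proof.
split=> [U phi|U u v E]; first by exists (phi n (Did n)); rewrite -yonedaE.
by have := sMapE E n (Did n); rewrite /= /yon sact_id !comp1l.
Qed.

End Cones.

Section Pushouts.
Variable C : Cat.

Lemma pushout_glue (A B D E : sSet) (a : sMap A B) (b : sMap A D) (c : sMap B E)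
    (d : sMap D E) : IsPushout a b c d ->
  forall Z (u : sMap B Z) (v : sMap D Z), (forall n x, u n (a n x) = v n (b n x)) ->
  exists w : sMap E Z, scomp w c = u /\ scomp w d = v.
Proof.
case=> _ U Z u v huv; have [w [[w1 w2] _]] := U Z u v huv.
by exists w; split; apply: sMap_eq.
Qed.

Lemma pushout_uniq (A B D E : sSet) (a : sMap A B) (b : sMap A D) (c : sMap B E)
    (d : sMap D E) : IsPushout a b c d ->
  forall Z (w1 w2 : sMap E Z), scomp w1 c = scomp w2 c -> scomp w1 d = scomp w2 d -> w1 = w2.
Proof.
case=> sq U Z w1 w2 e1 e2.
have h1 : forall n x, scomp w1 c n (a n x) = scomp w1 d n (b n x).
  by move=> n x /=; rewrite sq.
have [w [_ Hw]] := U Z _ _ h1.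
apply: sMap_eq => n x; rewrite (Hw w1) // (Hw w2) // => m y.
  by rewrite -[LHS]/(scomp w2 c m y) -e1.
by rewrite -[LHS]/(scomp w2 d m y) -e2.
Qed.

Lemma pushout_represents (X : sObj C) (A B D E : sSet) (a : sMap A B) (b : sMap A D)
    (c : sMap B E) (d : sMap D E) : IsPushout a b c d ->
  forall MA (eA : sMap A (homs MA X)) MB (eB : sMap B (homs MB X))
    MD (eD : sMap D (homs MD X)),
  represents eA -> represents eB -> represents eD ->
  forall (ra : hom MB MA) (rb : hom MD MA),
  precomp ra eA = scomp eB a -> precomp rb eA = scomp eD b ->
  forall P p1 p2, IsPullback ra rb P p1 p2 ->
  exists eE : sMap E (homs P X), represents eE.
Proof.
move=> PO MA eA MB eB MD eD RA RB RD ra rb Ea Eb P p1 p2 PB.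
have agree : forall n x, precomp p1 eB n (a n x) = precomp p2 eD n (b n x).
  move=> n x /=; have /= <- := sMapE Ea n x; have /= <- := sMapE Eb n x.
  by rewrite -!compA; congr (comp _ _); case: PB.
have [w [w1 w2]] := pushout_glue PO agree.
exists w; split.
- move=> U phi.
  have [u1 Hu1] := RB.1 U (scomp phi c).
  have [u2 Hu2] := RD.1 U (scomp phi d).
  have h12 : comp ra u1 = comp rb u2.
    apply: RA.2; rewrite -!precomp_comp Ea Eb !precomp_scomp Hu1 Hu2.
    by apply: sMap_eq => n x /=; case: PO => ->.
  have [v [[v1 v2] _]] := PB.2 U u1 u2 h12.
  by exists v; apply: (pushout_uniq PO);
    rewrite -precomp_scomp ?w1 ?w2 precomp_comp ?v1 ?v2 ?Hu1 ?Hu2.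
- move=> U u v huv.
  have E1 : precomp u (precomp p1 eB) = precomp v (precomp p1 eB).
    by rewrite -w1 !precomp_scomp huv.
  have E2 : precomp u (precomp p2 eD) = precomp v (precomp p2 eD).
    by rewrite -w2 !precomp_scomp huv.
  rewrite !precomp_comp in E1 E2.
  by apply: (pullback_uniq PB); [exact: RB.2 E1 | exact: RD.2 E2].
Qed.

End Pushouts.

Lemma sub_ext_iso (K : sSet) (P Q : forall n, K n -> bool) (clP : sclosed P)
    (clQ : sclosed Q) :
  (forall n x, P n x = Q n x) ->
  exists (phi : sMap (sub clP) (sub clQ)) (psi : sMap (sub clQ) (sub clP)),
    (forall n x, psi n (phi n x) = x) /\ (forall n x, phi n (psi n x) = x).
Proof.
move=> hPQ.
have h1 : forall n x, P n x -> Q n x by move=> n x; rewrite hPQ.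
have h2 : forall n x, Q n x -> P n x by move=> n x; rewrite hPQ.
by exists (subincl clP clQ h1), (subincl clQ clP h2); split => n x; apply: sig_eqb.
Qed.

Section Union.
Local Unset Implicit Arguments.
Variables (K : sSet) (P Q R W : forall n, K n -> bool).
Variables (clP : sclosed P) (clQ : sclosed Q) (clR : sclosed R) (clW : sclosed W).
Hypotheses (hRP : forall n x, R n x -> P n x) (hRQ : forall n x, R n x -> Q n x)
  (hPW : forall n x, P n x -> W n x) (hQW : forall n x, Q n x -> W n x).
Hypotheses (hR : forall n x, P n x -> Q n x -> R n x)
  (hW : forall n x, W n x -> P n x || Q n x).

Let notP_Q n x : P n x = false -> W n x -> Q n x.
Proof. by move=> e /hW; rewrite e. Qed.

Definition glue (Z : sSet) (u : sMap (sub clP) Z) (v : sMap (sub clQ) Z) n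
    (x : sub clW n) : Z n :=
  match sumbool_of_bool (P n (sval x)) with
  | left e => u n (exist (fun y => P n y) (sval x) e)
  | right e => v n (exist (fun y => Q n y) (sval x) (notP_Q n (sval x) e (svalP x)))
  end.

Lemma glue_cases n (x : sub clW n) :
  (exists y : sub clP n, sval y = sval x) \/ (exists y : sub clQ n, sval y = sval x).
Proof.
case hx : (Q n (sval x)); first by right; exists (exist _ (sval x) hx).
have hp : P n (sval x) by move: (hW n (sval x) (svalP x)); rewrite hx orbF.
by left; exists (exist _ (sval x) hp).
Qed.

Section Glue.
Variables (Z : sSet) (u : sMap (sub clP) Z) (v : sMap (sub clQ) Z).
Hypothesis agree : forall n x, u n (subincl clR clP hRP n x) = v n (subincl clR clQ hRQ n x).

Lemma glue_l n (x : sub clW n) (y : sub clP n) : sval y = sval x -> glue Z u v n x = u n y.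
Proof.
move=> e; rewrite /glue; case: (sumbool_of_bool _) => h.
- by congr (u n _); apply: sig_eqb.
- by move: (svalP y); rewrite e h.
Qed.

Lemma glue_r n (x : sub clW n) (y : sub clQ n) : sval y = sval x -> glue Z u v n x = v n y.
Proof.
move=> e; rewrite /glue; case: (sumbool_of_bool _) => h.
- have r : R n (sval x) by apply: hR => //; rewrite -e; exact: (svalP y).
  rewrite (_ : exist _ _ h = subincl clR clP hRP n (exist (fun z => R n z) (sval x) r)).
    by rewrite agree; congr (v n _); apply: sig_eqb.
  exact: sig_eqb.
- by congr (v n _); apply: sig_eqb.
Qed.



Definition glue_map : sMap (sub clW) Z.
Proof.
refine (@Build_sMap (sub clW) Z (fun n x => glue Z u v n x) _).
move=> m n f x; case: (glue_cases n x) => [[y e]|[y e]].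
- rewrite /= (glue_l n x y e) (glue_l m (act _ f x) (act _ f y)) ?snat //=.
  by rewrite e.
- rewrite /= (glue_r n x y e) (glue_r m (act _ f x) (act _ f y)) ?snat //=.
  by rewrite e.
Defined.

End Glue.

Lemma union_pushout :
  IsPushout (subincl clR clP hRP) (subincl clR clQ hRQ)
            (subincl clP clW hPW) (subincl clQ clW hQW).
Proof.
split; first by move=> n x; apply: sig_eqb.
move=> Z u v agree; exists (glue_map Z u v agree); split; first split.
- by move=> n x; rewrite /= (glue_l Z u v n _ x).
- by move=> n x; rewrite /= (glue_r Z u v agree n _ x).
- move=> w' h1 h2 n x /=.
  case: (glue_cases n x) => [[y e]|[y e]].
  + rewrite (glue_l Z u v n x y e) -h1; congr (w' n _); exact: sig_eqb.
  + rewrite (glue_r Z u v agree n x y e) -h2; congr (w' n _); exact: sig_eqb.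
Qed.

End Union.

Definition spanned n (A : {set 'I_n.+1}) m (t : Dmor m n) : bool :=
  [forall k, sval t k \in A].
Arguments spanned [n] A m t.

Definition spanned_any n (L : seq {set 'I_n.+1}) m (t : Dmor m n) : bool :=
  has (fun A => spanned A m t) L.
Arguments spanned_any [n] L m t.

Lemma spanned_closed n (A : {set 'I_n.+1}) : sclosed (A := Delta n) (spanned A).
Proof. by move=> m p f x /forallP h; apply/forallP => k; rewrite DcompE. Qed.

Arguments spanned_closed [n] A.

Lemma spanned_any_closed n (L : seq {set 'I_n.+1}) : sclosed (A := Delta n) (spanned_any L).
Proof.
by move=> m p f x /hasP [A AL h]; apply/hasP; exists A => //; exact: spanned_closed.
Qed.
Arguments spanned_any_closed [n] L.

Lemma spannedI n (A B : {set 'I_n.+1}) m t :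
  spanned (A :&: B) m t = spanned A m t && spanned B m t.
Proof.
apply/forallP/andP => [h|[/forallP h1 /forallP h2] k]; last by rewrite inE h1 h2.
by split; apply/forallP => k; move: (h k); rewrite inE => /andP[].
Qed.

Definition hornL n (i : 'I_n.+1) : seq {set 'I_n.+1} :=
  [seq [set~ j] | j <- enum 'I_n.+1 & j != i].

Lemma horn_spanned_any n (i : 'I_n.+1) m (t : Dmor m n) :
  hornb i m t = spanned_any (hornL i) m t.
Proof.
apply/existsP/hasP => [[j /andP [ji /forallP h]]|[B /mapP [j]]].
- exists [set~ j]; first by apply/mapP; exists j => //; rewrite mem_filter ji mem_enum.
  by apply/forallP => k; rewrite !inE; exact: h.
- rewrite mem_filter mem_enum andbT => ji -> /forallP h; exists j; rewrite ji /=.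
  by apply/forallP => k; move: (h k); rewrite !inE.
Qed.

(* The face of Delta^(n+1) opposite to j, as the image of the coface map
   [n] -> [n+1] skipping j; [collapse j] is a retraction of it. *)
Definition coface_fun n (j : 'I_n.+2) : {ffun 'I_n.+1 -> 'I_n.+2} :=
  [ffun x : 'I_n.+1 => inord (if (x < j)%N then (x : nat) else (x : nat).+1)].
Definition collapse_fun n (j : 'I_n.+2) : {ffun 'I_n.+2 -> 'I_n.+1} :=
  [ffun x : 'I_n.+2 => inord (if (x < j)%N then (x : nat) else (x : nat).-1)].

Lemma coface_funE n j x :
  nat_of_ord (@coface_fun n j x) = if (x < j)%N then (x : nat) else (x : nat).+1.
Proof. rewrite ffunE inordK //; have := ltn_ord x; have := ltn_ord j; case: ifP; lia. Qed.

Lemma collapse_funE n j x :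
  nat_of_ord (@collapse_fun n j x) = if (x < j)%N then (x : nat) else (x : nat).-1.
Proof. rewrite ffunE inordK //; have := ltn_ord x; have := ltn_ord j; case: ifP; lia. Qed.

Lemma coface_mono n j : monob (@coface_fun n j).
Proof.
apply/forallP => a; apply/forallP => b; apply/implyP => h; rewrite !coface_funE.
by case: ifP; case: ifP; lia.
Qed.

Lemma collapse_mono n j : monob (@collapse_fun n j).
Proof.
apply/forallP => a; apply/forallP => b; apply/implyP => h; rewrite !collapse_funE.
by case: ifP; case: ifP; lia.
Qed.

Definition coface n j : Dmor n n.+1 := exist _ (@coface_fun n j) (coface_mono j).
Definition collapse n j : Dmor n.+1 n := exist _ (@collapse_fun n j) (collapse_mono j).

Lemma coface_collapse n (j x : 'I_n.+2) : x != j -> coface_fun j (collapse_fun j x) = x.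
Proof.
move/eqP=> h; apply: val_inj; rewrite /= coface_funE collapse_funE.
have h' : (x : nat) <> j by move=> e; apply: h; apply: val_inj.
by case: ifP; case: ifP; lia.
Qed.

Lemma collapse_coface n (j : 'I_n.+2) y : collapse_fun j (coface_fun j y) = y.
Proof. by apply: val_inj; rewrite /= collapse_funE coface_funE; case: ifP; case: ifP; lia. Qed.

Section Face.
Variables (n : nat) (j : 'I_n.+2) (A : {set 'I_n.+2}).
Hypothesis hj : j \notin A.

Definition face_set : {set 'I_n.+1} := [set y | coface_fun j y \in A].

Lemma spanned_avoid m (t : Dmor m n.+1) k : spanned A m t -> sval t k != j.
Proof. by move=> /forallP /(_ k); apply: contraTneq => ->. Qed.

Lemma face_restrict_spanned m (x : sub (spanned_closed A) m) :
  spanned face_set m (Dcomp (collapse j) (sval x)).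
Proof.
have sx := svalP x; apply/forallP => k; rewrite inE DcompE /= coface_collapse.
  exact: (forallP sx).
exact: spanned_avoid sx.
Qed.

Lemma face_extend_spanned m (x : sub (spanned_closed face_set) m) :
  spanned A m (Dcomp (coface j) (sval x)).
Proof. by apply/forallP => k; move: (forallP (svalP x) k); rewrite inE DcompE. Qed.

Definition face_restrict : sMap (sub (spanned_closed A)) (sub (spanned_closed face_set)).
Proof.
refine (@Build_sMap (sub (spanned_closed A)) (sub (spanned_closed face_set))
  (fun m x => exist (fun t => spanned face_set m t) _ (face_restrict_spanned x)) _).
by move=> p q f x; do 2 apply: sig_eqb; apply/ffunP => i; rewrite /= !ffunE.
Defined.

Definition face_extend : sMap (sub (spanned_closed face_set)) (sub (spanned_closed A)).
Proof.
refine (@Build_sMap (sub (spanned_closed face_set)) (sub (spanned_closed A))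
  (fun m x => exist (fun t => spanned A m t) _ (face_extend_spanned x)) _).
by move=> p q f x; do 2 apply: sig_eqb; apply/ffunP => i; rewrite /= !ffunE.
Defined.

Lemma face_extendK m x : face_extend m (face_restrict m x) = x.
Proof.
do 2 apply: sig_eqb; apply/ffunP => k.
rewrite -[LHS]/(sval (Dcomp (coface j) (Dcomp (collapse j) (sval x))) k) !DcompE.
rewrite coface_collapse //.
exact: (spanned_avoid _ (svalP x)).
Qed.

Lemma face_restrictK m x : face_restrict m (face_extend m x) = x.
Proof.
do 2 apply: sig_eqb; apply/ffunP => k.
by rewrite -[LHS]/(sval (Dcomp (collapse j) (Dcomp (coface j) (sval x))) k) !DcompE collapse_coface.
Qed.

End Face.

Section HornMaps.
Variables (C : Cat) (X : sObj C) (t0 : C).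
Hypothesis terminal_t0 : IsTerminal t0.
Hypothesis pullbacks : forall (a b c : C) (f : hom a c) (g : hom b c),
  exists (P : C) (p1 : hom P a) (p2 : hom P b), IsPullback f g P p1 p2.

Lemma spanned_full_represents n :
  exists M (e : sMap (sub (spanned_closed [set: 'I_n.+1])) (homs M X)), represents e.
Proof.
have full m (t : Dmor m n) : spanned setT m t by apply/forallP => k; rewrite inE.
unshelve epose (psi := @Build_sMap (Delta n) (sub (spanned_closed setT))
  (fun m t => exist _ t (full m t)) _); first by move=> p q f x; apply: sig_eqb.
exists (X n), (scomp (yoneda X n) (incl (spanned_closed setT))).
apply: (represents_transport (psi := psi)) => // [m x|]; first exact: sig_eqb.
exact: yoneda_represents.
Qed.

Lemma spanned_represents n (A : {set 'I_n.+1}) :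
  exists M (e : sMap (sub (spanned_closed A)) (homs M X)), represents e.
Proof.
elim: n A => [|n IH] A; have [-> | ] := eqVneq A setT;
  try exact: spanned_full_represents; rewrite -properT => /properP [_ [j _ hj]].
- exists t0; apply: empty_represents => // m [x /forallP /(_ ord0)].
  by rewrite (ord1 (sval x ord0)) -(ord1 j) (negbTE hj).
- have [M [e Re]] := IH (face_set j A).
  exists M, (scomp e (face_restrict hj)).
  exact: (represents_transport (@face_extendK _ _ _ hj) (@face_restrictK _ _ _ hj) Re).
Qed.

Lemma spanned_any_represents n (L : seq {set 'I_n.+1}) :
  exists M (e : sMap (sub (spanned_any_closed L)) (homs M X)), represents e.
Proof.
move: {2}(size L) (erefl (size L)) => s; elim: s L => [|s IH] [|A L] //= => [_|[hs]].
  by exists t0; apply: empty_represents => // m [].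
have [MP [eP RP]] := spanned_represents A.
have [MQ [eQ RQ]] := IH L hs.
have [MR [eR RR]] := IH (map (setI A) L) (etrans (size_map _ _) hs).
have hRP m x : spanned_any (map (setI A) L) m x -> spanned A m x.
  by case/hasP => _ /mapP [B _ ->]; rewrite spannedI => /andP [].
have hRQ m x : spanned_any (map (setI A) L) m x -> spanned_any L m x.
  by case/hasP => _ /mapP [B BL ->]; rewrite spannedI => /andP [_ h]; apply/hasP; exists B.
have hPW m x : spanned A m x -> spanned_any (A :: L) m x by rewrite /spanned_any /= => ->.
have hQW m x : spanned_any L m x -> spanned_any (A :: L) m x by move=> h; apply/orP; right.
have hR m x : spanned A m x -> spanned_any L m x -> spanned_any (map (setI A) L) m x.
  by move=> hA /hasP [B BL hB]; apply/hasP; exists (A :&: B); rewrite ?map_f ?spannedI ?hA.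
have hW m x : spanned_any (A :: L) m x -> spanned A m x || spanned_any L m x by [].
have [ra Era] := RR.1 MP (scomp eP (subincl (spanned_any_closed _) (spanned_closed A) hRP)).
have [rb Erb] := RR.1 MQ (scomp eQ (subincl (spanned_any_closed _) (spanned_any_closed L) hRQ)).
have [P [p1 [p2 PB]]] := pullbacks ra rb.
have PO := union_pushout _ _ _ _ _ (spanned_closed A) (spanned_any_closed L)
  (spanned_any_closed (map (setI A) L)) (spanned_any_closed (A :: L)) hRP hRQ hPW hQW hR hW.
have [eD RD] := pushout_represents PO RR RP RQ Era Erb PB.
by exists P, eD.
Qed.

Lemma horn_represents n (i : 'I_n.+1) :
  exists M (e : sMap (Horn i) (homs M X)), represents e.
Proof.
have [phi [psi [h1 h2]]] := sub_ext_iso (horn_closed i) (spanned_any_closed (hornL i))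
  (@horn_spanned_any n i).
have [M [e Re]] := spanned_any_represents (hornL i).
by exists M, (scomp e phi); exact: (represents_transport h1 h2 Re).
Qed.

End HornMaps.

Definition sid (A : sSet) : sMap A A := @Build_sMap A A (fun n x => x) (fun _ _ _ _ => erefl).

Section Relative.
Variables (C : Cat) (X Y : sObj C) (f : sHom X Y).

(* Q represents the pairs (c : K -> X, d : T -> Y) with f c = d j, i.e. Q is
   Map(K, X) x_{Map(K, Y)} Map(T, Y). *)
Definition rel_represents (K T : sSet) (j : sMap K T) (Q : C)
    (c : sMap K (homs Q X)) (d : sMap T (homs Q Y)) : Prop :=
  postcomp f c = scomp d j /\
  (forall U (c' : sMap K (homs U X)) (d' : sMap T (homs U Y)),
     postcomp f c' = scomp d' j -> exists u, precomp u c = c' /\ precomp u d = d') /\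
  (forall U (u v : hom U Q), precomp u c = precomp v c -> precomp u d = precomp v d -> u = v).
Arguments rel_represents [K T] j Q c d.

Lemma rel_represents_iso (K T : sSet) (j : sMap K T) Q c d Q' c' d' :
  rel_represents j Q c d -> rel_represents j Q' c' d' ->
  exists th : hom Q Q', iso th /\ precomp th c' = c /\ precomp th d' = d.
Proof.
move=> [Gc [Ge Gu]] [Gc' [Ge' Gu']].
have [th [E1 E2]] := Ge' Q c d Gc.
have [th' [E1' E2']] := Ge Q' c' d' Gc'.
exists th; split => //; exists th'; split.
- by apply: Gu; rewrite -precomp_comp ?E1' ?E1 ?E2' ?E2 precomp_id.
- by apply: Gu'; rewrite -precomp_comp ?E1' ?E1 ?E2' ?E2 precomp_id.
Qed.

Lemma rel_represents_transport (K K' T : sSet) (j : sMap K T) (phi : sMap K' K)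
    (psi : sMap K K') :
  (forall n x, psi n (phi n x) = x) -> (forall n x, phi n (psi n x) = x) ->
  forall Q c d, rel_represents j Q c d -> rel_represents (scomp j phi) Q (scomp c phi) d.
Proof.
move=> h1 h2 Q c d [Gc [Ge Gu]]; split; last split.
- by apply: sMap_eq => n x; exact: (sMapE Gc n (phi n x)).
- move=> U c' d' Ec'.
  have [u [Eu Ed]] : exists u, precomp u c = scomp c' psi /\ precomp u d = d'.
    apply: Ge; apply: sMap_eq => n x /=.
    by rewrite -{2}(h2 n x); exact: (sMapE Ec' n (psi n x)).
  exists u; split => //; apply: sMap_eq => n x.
  by rewrite precomp_scomp Eu /= h1.
- move=> U u v Ec; apply: Gu; apply: sMap_eq => n x.
  by have := sMapE Ec n (psi n x); rewrite /= h2.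
Qed.

Lemma represents_rel_represents (T : sSet) M (e : sMap T (homs M X)) :
  represents e -> rel_represents (sid T) M e (postcomp f e).
Proof.
move=> [Ex Un]; split; last split; first exact: sMap_eq.
- move=> U c' d' Ec'; have [u Eu] := Ex U c'; exists u; split => //.
  by rewrite -postcomp_precomp Eu Ec'; apply: sMap_eq.
- by move=> U u v Ec _; apply: Un.
Qed.

Lemma pullback_rel_represents (K T : sSet) (j : sMap K T)
    MKX (cKX : sMap K (homs MKX X)) MKY (cKY : sMap K (homs MKY Y))
    MTY (dTY : sMap T (homs MTY Y)) :
  represents cKX -> represents cKY -> represents dTY ->
  forall (fK : hom MKX MKY) (rY : hom MTY MKY),
  precomp fK cKY = postcomp f cKX -> precomp rY cKY = scomp dTY j ->
  forall P p1 p2, IsPullback fK rY P p1 p2 ->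
  rel_represents j P (precomp p1 cKX) (precomp p2 dTY).
Proof.
move=> RKX RKY RTY fK rY EfK ErY P p1 p2 PB; split; last split.
- by rewrite postcomp_precomp -EfK precomp_comp (proj1 PB) -precomp_comp ErY precomp_scomp.
- move=> U c' d' Ec'.
  have [u1 Eu1] := RKX.1 U c'.
  have [u2 Eu2] := RTY.1 U d'.
  have E12 : comp fK u1 = comp rY u2.
    apply: RKY.2; rewrite -!precomp_comp EfK ErY -postcomp_precomp Eu1 Ec'.
    by rewrite precomp_scomp Eu2.
  have [v [[v1 v2] _]] := PB.2 U u1 u2 E12.
  by exists v; rewrite !precomp_comp v1 v2.
- move=> U u v Ec Ed; apply: (pullback_uniq PB).
  + by apply: RKX.2; rewrite -!precomp_comp.
  + by apply: RTY.2; rewrite -!precomp_comp.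
Qed.

End Relative.
Arguments rel_represents [C X Y] f [K T] j Q c d.

Section Attach.
Variables (C : Cat) (X Y : sObj C) (f : sHom X Y).
Variables (n : nat) (i : 'I_n.+1) (F0 F1 T : sSet).
Variables (alpha : sMap (Horn i) F0) (beta : sMap (Delta n) F1) (inc : sMap F0 F1).
Hypothesis PO : IsPushout (incl (horn_closed i)) alpha beta inc.
Variables (j0 : sMap F0 T) (j1 : sMap F1 T).
Hypothesis j01 : scomp j1 inc = j0.
Variables (R : C) (cR : sMap (Horn i) (homs R X)) (dR : sMap (Delta n) (homs R Y)).
Hypothesis relR : rel_represents f (incl (horn_closed i)) R cR dR.
Variable q : hom (X n) R.
Hypotheses (qc : precomp q cR = scomp (yoneda X n) (incl (horn_closed i)))
  (qd : precomp q dR = postcomp f (yoneda X n)).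
Variables (Q0 : C) (c0 : sMap F0 (homs Q0 X)) (d0 : sMap T (homs Q0 Y)).
Hypothesis rel0 : rel_represents f j0 Q0 c0 d0.

Lemma attach_square : scomp inc alpha = scomp beta (incl (horn_closed i)).
Proof. by apply: sMap_eq => m x /=; case: PO => ->. Qed.

Section Glued.
Variable g : hom Q0 R.
Hypotheses (gc : precomp g cR = scomp c0 alpha)
  (gd : precomp g dR = scomp d0 (scomp j1 beta)).
Variables (Q1 : C) (p : hom Q1 Q0) (h : hom Q1 (X n)).
Hypothesis PB : IsPullback g q Q1 p h.
Variable c1 : sMap F1 (homs Q1 X).
Hypotheses (c1inc : scomp c1 inc = precomp p c0)
  (c1beta : scomp c1 beta = precomp h (yoneda X n)).

Lemma attach_compat : postcomp f c1 = scomp (precomp p d0) j1.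
Proof.
apply: (pushout_uniq PO); rewrite -postcomp_scomp -scompA.
- rewrite c1beta postcomp_precomp -qd precomp_comp -(proj1 PB) -precomp_comp gd.
  by rewrite precomp_scomp.
- by rewrite c1inc j01 postcomp_precomp rel0.1 precomp_scomp.
Qed.

Lemma attach_exists U (c' : sMap F1 (homs U X)) (d' : sMap T (homs U Y)) :
  postcomp f c' = scomp d' j1 ->
  exists u, precomp u c1 = c' /\ precomp u (precomp p d0) = d'.
Proof.
move=> Ec'.
have Ec'0 : postcomp f (scomp c' inc) = scomp d' j0.
  by rewrite postcomp_scomp Ec' -j01 scompA.
have [u1 [Eu1c Eu1d]] := rel0.2.1 U _ d' Ec'0.
set x := c' n (beta n (Did n)).
have Ex : scomp c' beta = precomp x (yoneda X n) := yonedaE (scomp c' beta).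
have E3 : comp g u1 = comp q x.
  apply: relR.2.2; rewrite -!precomp_comp.
  - by rewrite gc qc !precomp_scomp Eu1c -Ex -!scompA attach_square.
  - rewrite gd qd precomp_scomp Eu1d -postcomp_precomp -Ex postcomp_scomp Ec'.
    by rewrite scompA.
have [v [[v1 v2] _]] := PB.2 U u1 x E3.
exists v; rewrite precomp_comp v1; split => //.
apply: (pushout_uniq PO); rewrite -precomp_scomp.
- by rewrite c1beta precomp_comp v2.
- by rewrite c1inc precomp_comp v1.
Qed.

Lemma attach_uniq U (u v : hom U Q1) :
  precomp u c1 = precomp v c1 -> precomp u (precomp p d0) = precomp v (precomp p d0) ->
  u = v.
Proof.
move=> Ec Ed; apply: (pullback_uniq PB).
- apply: rel0.2.2; rewrite -!precomp_comp // -c1inc !precomp_scomp.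
  by rewrite Ec.
- apply: (yoneda_represents X n).2; rewrite -!precomp_comp -c1beta !precomp_scomp.
  by rewrite Ec.
Qed.

Lemma attach_rel_represents : rel_represents f j1 Q1 c1 (precomp p d0).
Proof.
split; [exact: attach_compat | split; [exact: attach_exists | exact: attach_uniq]].
Qed.

End Glued.

Lemma rel_represents_attach :
  (forall (a b c : C) (u : hom a c) (v : hom b c),
     exists (P : C) (p1 : hom P a) (p2 : hom P b), IsPullback u v P p1 p2) ->
  exists Q1 (c1 : sMap F1 (homs Q1 X)) (p : hom Q1 Q0) (g : hom Q0 R) (h : hom Q1 (X n)),
    IsPullback g q Q1 p h /\ rel_represents f j1 Q1 c1 (precomp p d0) /\
    scomp c1 inc = precomp p c0.
Proof.
move=> pullbacks.
have [g [gc gd]] : exists g, precomp g cR = scomp c0 alpha /\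
                             precomp g dR = scomp d0 (scomp j1 beta).
  apply: relR.2.1; rewrite postcomp_scomp rel0.1 -j01 -!scompA.
  by rewrite attach_square.
have [Q1 [p [h PB]]] := pullbacks _ _ _ g q.
have agree m x : precomp h (yoneda X n) m (incl (horn_closed i) m x) = precomp p c0 m (alpha m x).
  have E : precomp h (scomp (yoneda X n) (incl (horn_closed i))) = precomp p (scomp c0 alpha).
    by rewrite -qc -gc !precomp_comp (proj1 PB).
  exact: (sMapE E m x).
have [c1 [c1beta c1inc]] := pushout_glue PO agree.
exists Q1, c1, p, g, h; split => //; split => //.
exact: (attach_rel_represents gc gd PB c1inc c1beta).
Qed.

End Attach.

Section HornComparison.
Variables (C : Cat) (X Y : sObj C) (f : sHom X Y) (t0 : C).
Hypothesis terminal_t0 : IsTerminal t0.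
Hypothesis pullbacks : forall (a b c : C) (u : hom a c) (v : hom b c),
  exists (P : C) (p1 : hom P a) (p2 : hom P b), IsPullback u v P p1 p2.

(* q : X_n -> Map(Lambda^n_i c-> Delta^n, f) is the map of the horn-filling condition. *)
Lemma horn_rel_represents n (i : 'I_n.+1) :
  exists R (cR : sMap (Horn i) (homs R X)) (dR : sMap (Delta n) (homs R Y)) (q : hom (X n) R),
    [/\ rel_represents f (incl (horn_closed i)) R cR dR,
        precomp q cR = scomp (yoneda X n) (incl (horn_closed i)),
        precomp q dR = postcomp f (yoneda X n)
      & forall Pr, rel_comparison Pr (horn_closed i) f (@yon C X n) -> Pr _ _ q].
Proof.
have [MLX [eLX RLX]] := horn_represents X terminal_t0 pullbacks i.
have [MLY [eLY RLY]] := horn_represents Y terminal_t0 pullbacks i.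
have [fS EfS] := RLY.1 MLX (postcomp f eLX).
have [rY ErY] := RLY.1 (Y n) (scomp (yoneda Y n) (incl (horn_closed i))).
have [R [r1 [r2 PB]]] := pullbacks fS rY.
have relR := pullback_rel_represents (f := f) RLX RLY (yoneda_represents Y n) EfS ErY PB.
have [q [qc qd]] := relR.2.1 _ (scomp (yoneda X n) (incl (horn_closed i)))
  (postcomp f (yoneda X n)) (postcomp_scomp _ _ _).
exists R, (precomp r1 eLX), (precomp r2 (yoneda Y n)), q; split => // Pr hrel.
apply: (hrel _ _ _ _ _ _ (represents_IsMap RLX) (represents_IsMap RLY)
  (represents_IsMap (yoneda_represents Y n)) fS rY _ _ R r1 r2 PB (comp r1 q) (comp r2 q))
  => // m s.
- exact: (sMapE EfS m s).
- exact: (sMapE ErY m s).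
- by rewrite compA; exact: (sMapE qc m s).
- by rewrite compA; exact: (sMapE qd m s).
Qed.

End HornComparison.

Definition stable_class (C : Cat) (Pr : forall a b : C, hom a b -> Prop) : Prop :=
  [/\ forall a b (g : hom a b), iso g -> Pr a b g,
      forall a b c (g : hom b c) (f : hom a b), Pr a b f -> Pr b c g -> Pr a c (comp g f)
    & forall a b c (f : hom a c) (g : hom b c) P p1 p2,
        IsPullback f g P p1 p2 -> Pr b c g -> Pr P a p1].

Lemma cover_stable (C : Cat) (V : Descent C) : stable_class (iscover V).
Proof.
split=> [a b g|a b c g f|a b c f g P p1 p2 PB];
  [exact: iso_cover | exact: cover_comp | exact: cover_pullback PB].
Qed.

Lemma iso_stable (C : Cat) : stable_class (@iso C).
Proof.
split=> [//|a b c g f|a b c f g P p1 p2 PB]; [exact: iso_comp | exact: iso_pullback PB].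
Qed.

Section Expansion.
Local Unset Implicit Arguments.
Variables (C : Cat) (Pr : forall a b : C, hom a b -> Prop).
Hypothesis Pr_stable : stable_class Pr.
Variables (t0 : C).
Hypothesis terminal_t0 : IsTerminal t0.
Hypothesis pullbacks : forall (a b c : C) (u : hom a c) (v : hom b c),
  exists (P : C) (p1 : hom P a) (p2 : hom P b), IsPullback u v P p1 p2.
Variables (X Y : sObj C) (f : sHom X Y) (T : sSet) (L : nat).
Variables (F : nat -> forall n, T n -> bool) (Fcl : forall l, sclosed (F l)).
Variables (Fsub : forall l n x, F l n x -> F l.+1 n x).
Variables (ns : nat -> nat) (ix : forall l, 'I_(ns l).+1).
Hypothesis Fpushout : forall l, l < L -> exists alpha beta,
  IsPushout (incl (horn_closed (ix l))) alpha beta (subincl (Fcl l) (Fcl l.+1) (Fsub l)).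
Hypothesis horn_filling : forall l, l < L ->
  rel_comparison Pr (horn_closed (ix l)) f (@yon C X (ns l)).

Lemma filtration_mono l n x : F 0 n x -> F l n x.
Proof. by move=> h; elim: l => [//|l IH]; exact: Fsub. Qed.

Lemma rel_represents_filtration Q0 (c0 : sMap (sub (Fcl 0)) (homs Q0 X))
    (d0 : sMap T (homs Q0 Y)) :
  rel_represents f (incl (Fcl 0)) Q0 c0 d0 ->
  forall l, l <= L -> exists Q (c : sMap (sub (Fcl l)) (homs Q X)) (gam : hom Q Q0),
    [/\ Pr _ _ gam, rel_represents f (incl (Fcl l)) Q c (precomp gam d0)
      & precomp gam c0 = scomp c (subincl (Fcl 0) (Fcl l) (filtration_mono l))].
Proof.
have [Pr_iso Pr_comp Pr_pb] := Pr_stable.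
move=> rel0; elim=> [_|l IH lL].
  exists Q0, c0, (idm Q0); split; [exact: Pr_iso (iso_id _) | by rewrite precomp_id |].
  by rewrite precomp_id; apply: sMap_eq => m x; congr (c0 m _); exact: sig_eqb.
have [Q [c [gam [Prg relQ Ec]]]] := IH (ltnW lL).
have [alpha [beta PO]] := Fpushout l lL.
have [R [cR [dR [q [relR qc qd Prq]]]]] :=
  horn_rel_represents f terminal_t0 pullbacks (ix l).
have j01 : scomp (incl (Fcl l.+1)) (subincl (Fcl l) (Fcl l.+1) (Fsub l)) = incl (Fcl l).
  exact: sMap_eq.
have [Q1 [c1 [p [g [h [PB [rel1 Ec1]]]]]]] :=
  rel_represents_attach PO j01 relR qc qd relQ pullbacks.
exists Q1, c1, (comp gam p); split.
- exact: Pr_comp (Pr_pb _ _ _ _ _ _ _ _ PB (Prq Pr (horn_filling l lL))) Prg.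
- by rewrite -precomp_comp.
- rewrite -precomp_comp Ec precomp_scomp -Ec1 -scompA.
  by congr (scomp c1 _); apply: sMap_eq => m x; exact: sig_eqb.
Qed.

Lemma rel_comparison_filtration (S : forall n, T n -> bool) (clS : sclosed S) :
  (forall n x, F 0 n x = S n x) -> (forall n x, F L n x) ->
  forall MTX (eTX : forall n, T n -> hom MTX (X n)), IsMap T X MTX eTX ->
  rel_comparison Pr clS f eTX.
Proof.
have [Pr_iso Pr_comp _] := Pr_stable.
move=> h0 hL MTX eTX HTX MSX eSX MSY eSY MTY eTY HSX HSY HTY fS rY EfS ErY
  P p1 p2 PB rX fT ErX EfT q q1 q2.
have RSX := IsMap_represents (proj1 HSX) HSX; set cSX := cone_map _ in RSX.
have RSY := IsMap_represents (proj1 HSY) HSY; set cSY := cone_map _ in RSY.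
have RTY := IsMap_represents (proj1 HTY) HTY; set dTY := cone_map _ in RTY.
have RTX := IsMap_represents (proj1 HTX) HTX; set cTX := cone_map _ in RTX.
have EfS' : precomp fS cSY = postcomp f cSX by apply: sMap_eq.
have ErY' : precomp rY cSY = scomp dTY (incl clS) by apply: sMap_eq.
have ErX' : precomp rX cSX = scomp cTX (incl clS) by apply: sMap_eq.
have EfT' : precomp fT dTY = postcomp f cTX by apply: sMap_eq.
have relS := pullback_rel_represents RSX RSY RTY EfS' ErY' PB.
have h0S n x : F 0 n x -> S n x by rewrite h0.
have hS0 n x : S n x -> F 0 n x by rewrite h0.
have rel0 := rel_represents_transport (phi := subincl (Fcl 0) clS h0S)
  (psi := subincl clS (Fcl 0) hS0) ltac:(by move=> *; apply: sig_eqb) ltac:(by move=> *; apply: sig_eqb) relS.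
rewrite (_ : scomp _ _ = incl (Fcl 0)) in rel0; last exact: sMap_eq.
have [QL [cL [gam [Prg relL EcL]]]] := rel_represents_filtration _ _ _ rel0 L (leqnn L).
unshelve epose (toFL := @Build_sMap T (sub (Fcl L))
  (fun n t => exist (fun z => F L n z) t (hL n t)) _); first by move=> *; apply: sig_eqb.
have relT := rel_represents_transport (phi := incl (Fcl L))
  (psi := toFL) ltac:(by move=> *; apply: sig_eqb) (fun _ _ => erefl)
  (represents_rel_represents f RTX).
rewrite (_ : scomp _ _ = incl (Fcl L)) in relT; last exact: sMap_eq.
have [th [Ith [Ec Ed]]] := rel_represents_iso relT relL.
suff -> : q = comp gam th by exact: Pr_comp (Pr_iso _ _ _ Ith) Prg.
apply: rel0.2.2.
- rewrite precomp_scomp precomp_comp q1 ErX' -precomp_comp EcL precomp_scomp Ec.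
  exact: sMap_eq.
- by rewrite precomp_comp q2 EfT' -precomp_comp Ed.
Qed.

End Expansion.

Lemma expansion_rel_comparison (C : Cat) (Pr : forall a b : C, hom a b -> Prop) (t0 : C) :
  stable_class Pr -> IsTerminal t0 ->
  (forall (a b c : C) (u : hom a c) (v : hom b c),
     exists (P : C) (p1 : hom P a) (p2 : hom P b), IsPullback u v P p1 p2) ->
  forall (X Y : sObj C) (f : sHom X Y) (T : sSet) (S : forall n, T n -> bool)
    (clS : sclosed S) m,
  expansion T S m ->
  (forall n (i : 'I_n.+1), m <= n -> rel_comparison Pr (horn_closed i) f (@yon C X n)) ->
  forall MTX (eTX : forall n, T n -> hom MTX (X n)), IsMap T X MTX eTX ->
  rel_comparison Pr clS f eTX.
Proof.
move=> Pr_stable terminal pullbacks X Y f T S clS m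
  [_ [L [F [Fcl [Fsub [ns [ix [h0 [hL [hns [_ hpo]]]]]]]]]]] horn_filling.
apply: (rel_comparison_filtration _ _ Pr_stable _ terminal pullbacks _ _ f _ L F Fcl Fsub
  ns ix hpo) h0 hL => l lL.
by apply: horn_filling; exact: hns.
Qed.

Lemma rel_comparison_iso (C : Cat) (X Y : sObj C) (f : sHom X Y) n (i : 'I_n.+1) :
  abs_comparison (@iso C) (horn_closed i) (@yon C X n) ->
  abs_comparison (@iso C) (horn_closed i) (@yon C Y n) ->
  rel_comparison (@iso C) (horn_closed i) f (@yon C X n).
Proof.
move=> hX hY MSX eSX MSY eSY MTY eTY HSX HSY HTY fS rY EfS ErY P p1 p2 PB
  rX fT ErX EfT q q1 q2.
have IrX : iso rX := hX MSX eSX HSX rX ErX.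
have RTY := IsMap_represents (proj1 HTY) HTY.
have [psi Epsi] := RTY.1 (Y n) (yoneda Y n).
have Ipsi : iso psi := represents_iso (yoneda_represents Y n) RTY Epsi.
have IrY : iso rY.
  apply: iso_cancel_r Ipsi _; apply: (hY MSY eSY HSY) => m s.
  by rewrite compA ErY; exact: (sMapE Epsi m (sval s)).
by apply: (iso_cancel_l (iso_pullback PB IrY)); rewrite q1.
Qed.

Section Absolute.
Variables (C : Cat) (t : C).
Hypothesis terminal_t : IsTerminal t.

Definition to_terminal (a : C) : hom a t :=
  proj1_sig (constructive_indefinite_description _ (terminal_t a)).

Lemma terminal_uniq (a : C) (u v : hom a t) : u = v.
Proof. by have [w Hw] := terminal_t a; rewrite (Hw u) (Hw v). Qed.

Definition terminal_sObj : sObj C.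
Proof.
refine (@Build_sObj C (fun _ => t) (fun _ _ _ => idm t) _ _) => //.
by move=> *; rewrite comp1l.
Defined.

Definition to_terminal_sObj (X : sObj C) : sHom X terminal_sObj.
Proof.
refine (@Build_sHom C X terminal_sObj (fun n => to_terminal (X n)) _).
by move=> *; apply: terminal_uniq.
Defined.

Lemma IsMap_terminal (K : sSet) M (e : forall n, K n -> hom M t) :
  IsMap K terminal_sObj M e -> IsTerminal M.
Proof.
move=> [_ U] a.
have cn : cone (X := terminal_sObj) (fun n (x : K n) => to_terminal a).
  by move=> *; apply: terminal_uniq.
have [u [_ Hu]] := U a _ cn.
by exists u => v; apply: Hu => n x; exact: terminal_uniq.
Qed.

(* Map(S c-> T, X -> 1) is Map(S, X). *)
Lemma abs_rel_comparison (Pr : forall a b : C, hom a b -> Prop) :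
  stable_class Pr ->
  forall (T : sSet) (S : forall n, T n -> bool) (clS : sclosed S) (X : sObj C) A
    (eA : forall n, T n -> hom A (X n)),
  abs_comparison Pr clS eA -> rel_comparison Pr clS (to_terminal_sObj X) eA.
Proof.
move=> [Pr_iso Pr_comp _] T S clS X A eA hX MSX eSX MSY eSY MTY eTY HSX HSY HTY
  fS rY EfS ErY P p1 p2 PB rX fT ErX EfT q q1 q2.
have PrX := hX MSX eSX HSX rX ErX.
have IrY : iso rY := iso_terminal rY (IsMap_terminal HTY) (IsMap_terminal HSY).
have [p1' [h1 h2]] := iso_pullback PB IrY.
have -> : q = comp p1' rX by rewrite -q1 compA h1 comp1l.
by apply: Pr_comp PrX (Pr_iso _ _ _ _); exists p1.
Qed.

Lemma rel_abs_comparison (Pr : forall a b : C, hom a b -> Prop)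
    (T : sSet) (S : forall n, T n -> bool) (clS : sclosed S) (X : sObj C) A
    (eA : forall n, T n -> hom A (X n)) :
  rel_comparison Pr clS (to_terminal_sObj X) eA -> abs_comparison Pr clS eA.
Proof.
move=> hr MS eS HS r Er.
have Ht K : IsMap K terminal_sObj t (fun n (x : K n) => idm t).
  split; first by move=> *; rewrite comp1l.
  move=> U phi _; exists (to_terminal U); split=> *; exact: terminal_uniq.
have PB : IsPullback (to_terminal MS) (idm t) MS (idm MS) (to_terminal MS).
  split=> [|Q q1 q2 _]; first exact: terminal_uniq.
  exists q1; split; first by split; [rewrite comp1l | apply: terminal_uniq].
  by move=> u' <- _; rewrite comp1l.
apply: (hr MS eS t _ t _ HS (Ht _) (Ht _) (to_terminal MS) (idm t) _ _ MS (idm MS)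
  (to_terminal MS) PB r (to_terminal A) Er _ r); rewrite ?comp1l //;
  by move=> *; apply: terminal_uniq.
Qed.

End Absolute.

Theorem lemma3p9 (C : Cat) (V : Descent C) (k : nat) (T : sSet)
  (S : forall n, T n -> bool) (clS : sclosed S) (m : nat) :
  finite_sSet T -> expansion T S m ->
  (* (i) *)
  (forall X : sObj C, kgroupoid V k X ->
   forall (MT : C) (eT : forall n, T n -> hom MT (X n)), IsMap T X MT eT ->
     abs_comparison (iscover V) clS eT /\
     ((k < m)%N -> abs_comparison (@iso C) clS eT)) /\
  (* (ii) *)
  (forall (X Y : sObj C) (f : sHom X Y),
     kgroupoid V k X -> kgroupoid V k Y -> fibration V f ->
   forall (MTX : C) (eTX : forall n, T n -> hom MTX (X n)), IsMap T X MTX eTX ->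
     rel_comparison (iscover V) clS f eTX /\
     ((k < m)%N -> rel_comparison (@iso C) clS f eTX)).
Proof.
move=> _ exp; have m_gt0 := exp.1.
have [t Ht] := has_terminal V; have pullbacks := has_pullbacks V.
have covers := expansion_rel_comparison (cover_stable V) Ht pullbacks.
have isos := expansion_rel_comparison (@iso_stable C) Ht pullbacks.
split=> [X hX MT eT HT | X Y f hX hY hf MTX eTX HTX]; split=> [|km].
- apply: (@rel_abs_comparison _ _ Ht); apply: covers exp _ _ _ HT => n i mn.
  exact: (@abs_rel_comparison _ _ Ht _ (cover_stable V)) (hX n i (leq_trans m_gt0 mn)).1.
- apply: (@rel_abs_comparison _ _ Ht); apply: isos exp _ _ _ HT => n i mn.
  apply: (@abs_rel_comparison _ _ Ht _ (@iso_stable C)).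
  exact: (hX n i (leq_trans m_gt0 mn)).2 (leq_trans km mn).
- apply: covers exp _ _ _ HTX => n i mn; exact: hf n i (leq_trans m_gt0 mn).
- apply: isos exp _ _ _ HTX => n i mn; have n_gt0 := leq_trans m_gt0 mn.
  apply: rel_comparison_iso.
  + exact: (hX n i n_gt0).2 (leq_trans km mn).
  + exact: (hY n i n_gt0).2 (leq_trans km mn).
Qed.
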